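(* In a RiFle assignment game, if $p_i$ is matched to $q_j$ in a stable outcome $(\bar u,\bar v;\mu)$, then $u_i+v_j=\alpha_{ij}$ (where $\alpha_{ij}=\beta_{ij}+\gamma_{ij}$).
   Context: A RiFle assignment game consists of two disjoint sets of agents $P=\{p_1,\dots,p_n\}$ and $Q=\{q_1,\dots,q_n\}$, a pair of nonnegative real numbers $(\beta_{ij},\gamma_{ij})$ for every pair $(p_i,q_j)\in P\times Q$ (write $\alpha_{ij}=\beta_{ij}+\gamma_{ij}$), and a designation of every agent as rigid or flexible. Let $\mathcal R$ be the set of pairs with at least one rigid agent and $\mathcal F$ the set of pairs with both agents flexible. An outcome $(\bar u,\bar v;\mu)$ consists of a matching $\mu$ between $P$ and $Q$ (write $p_i\stackrel{\mu}{\longleftrightarrow} q_j$) and payoff vectors $\bar u,\bar v\in\mathbb R^n$. It is feasible if: (1) $u_i\ge0$, $v_j\ge0$; (2) if a rigid $p_i$ is matched to $q_j$ then $u_i=\beta_{ij}$ and, if $q_j$ is flexible, $v_j\ge\gamma_{ij}$; symmetrically for a rigid $q_j$ matched to $p_i$: $v_j=\gamma_{ij}$ and, if $p_i$ is flexible, $u_i\ge\beta_{ij}$; (3) $\sum_iu_i+\sum_jv_j=\sum_{p_i\stackrel{\mu}{\longleftrightarrow}q_j}\alpha_{ij}$. It is stable if feasible and $u_i+v_j\ge\alpha_{ij}$ for $(p_i,q_j)\in\mathcal F$ and ($u_i\ge\beta_{ij}$ or $v_j\ge\gamma_{ij}$) for $(p_i,q_j)\in\mathcal R$. *)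

From mathcomp Require Import all_boot all_order all_algebra.
From mathcomp Require Import perm.
Set Implicit Arguments. Unset Strict Implicit. Unset Printing Implicit Defensive.
Import Order.TTheory GRing.Theory Num.Theory.
Local Open Scope ring_scope.

(* A RiFle assignment game with n agents on each side, indexed by 'I_n.
   beta i j, gamma i j : the pair (beta_ij, gamma_ij) for (p_i, q_j);
   rigP i = true iff p_i is rigid, rigQ j = true iff q_j is rigid
   (false = flexible). *)
Record rifle_game (R : realFieldType) (n : nat) := RiFle {
  beta : 'I_n -> 'I_n -> R;
  gamma : 'I_n -> 'I_n -> R;
  rigP : 'I_n -> bool;
  rigQ : 'I_n -> bool;
  beta_ge0 : forall i j, 0 <= beta i j;
  gamma_ge0 : forall i j, 0 <= gamma i j
}.

Definition alpha (R : realFieldType) n (G : rifle_game R n) (i j : 'I_n) : R :=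
  beta G i j + gamma G i j.

Definition in_F (R : realFieldType) n (G : rifle_game R n) (i j : 'I_n) : bool :=
  ~~ rigP G i && ~~ rigQ G j.

(* An outcome (u, v; mu): mu is a perfect matching between P and Q, encoded
   as a permutation: p_i is matched to q_(mu i). *)
Definition feasible (R : realFieldType) n (G : rifle_game R n)
  (u v : 'I_n -> R) (mu : {perm 'I_n}) : Prop :=
  [/\ (forall i, 0 <= u i) /\ (forall j, 0 <= v j),
      (forall i, rigP G i ->
          u i = beta G i (mu i) /\ (~~ rigQ G (mu i) -> gamma G i (mu i) <= v (mu i))),
      (forall i, rigQ G (mu i) ->
          v (mu i) = gamma G i (mu i) /\ (~~ rigP G i -> beta G i (mu i) <= u i))
    & \sum_i u i + \sum_j v j = \sum_i alpha G i (mu i)].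

Definition stable (R : realFieldType) n (G : rifle_game R n)
  (u v : 'I_n -> R) (mu : {perm 'I_n}) : Prop :=
  feasible G u v mu /\
  (forall i j, in_F G i j -> alpha G i j <= u i + v j) /\
  (forall i j, ~~ in_F G i j -> (beta G i j <= u i) \/ (gamma G i j <= v j)).

From mathcomp Require Import all_boot all_order all_algebra.
From mathcomp Require Import perm.
Set Implicit Arguments. Unset Strict Implicit. Unset Printing Implicit Defensive.
Import Order.TTheory GRing.Theory Num.Theory.
Local Open Scope ring_scope.

(* In a stable outcome every matched pair receives at least its worth
   alpha: for a pair with a rigid agent this is forced by feasibility, for a
   flexible pair by stability.  Feasibility also says the total payoff is
   exactly the total worth of the matched pairs, so none of these
   inequalities can be strict. *)

Lemma ler_sum_eq (R : numDomainType) (I : finType) (F G : I -> R) :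
  (forall i, F i <= G i) -> \sum_i F i = \sum_i G i -> forall i, F i = G i.
Proof.
move=> leFG eq_sum i; apply/esym/eqP; rewrite -subr_eq0; apply/eqP.
have ge0 k : true -> 0 <= G k - F k by rewrite subr_ge0 leFG.
by apply: (psumr_eq0P ge0) => //; rewrite sumrB eq_sum subrr.
Qed.

Section MatchedPairs.

Variables (R : realFieldType) (n : nat) (G : rifle_game R n).
Variables (u v : 'I_n -> R) (mu : {perm 'I_n}).

Lemma feasible_sum_matched :
  feasible G u v mu -> \sum_i (u i + v (mu i)) = \sum_i alpha G i (mu i).
Proof.
move=> [_ _ _ <-]; rewrite big_split /=; congr (_ + _).
by rewrite [RHS](reindex_inj (@perm_inj _ mu)).
Qed.

Lemma stable_alpha_le_matched :
  stable G u v mu -> forall i, alpha G i (mu i) <= u i + v (mu i).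
Proof.
move=> [[_ rigidP rigidQ _] [flexible _]] i; rewrite /alpha.
case rp: (rigP G i); case rq: (rigQ G (mu i)).
- by case: (rigidP i rp) => -> _; case: (rigidQ i rq) => -> _.
- by case: (rigidP i rp) => -> le_gamma; rewrite lerD2l le_gamma ?rq.
- by case: (rigidQ i rq) => -> le_beta; rewrite lerD2r le_beta ?rp.
- by apply: flexible; rewrite /in_F rp rq.
Qed.

End MatchedPairs.

Theorem proposition1 (R : realFieldType) (n : nat) (G : rifle_game R n)
  (u v : 'I_n -> R) (mu : {perm 'I_n}) (i j : 'I_n) :
  stable G u v mu -> mu i = j -> u i + v j = alpha G i j.
Proof.
move=> stab <-; apply: esym.
exact: ler_sum_eq (stable_alpha_le_matched stab) (esym (feasible_sum_matched stab.1)) i.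
Qed.
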